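(* Let $N \geq 2$ and, for each generation $t \in \{1,2,\dots\}$, let $\nu_t^{(1:N)} = (\nu_t^{(1)},\dots,\nu_t^{(N)})$ be non-negative integers with $\sum_{i=1}^N \nu_t^{(i)} = N$. Define $$c_N(t) := \frac{1}{(N)_2}\sum_{i=1}^N (\nu_t^{(i)})_2, \qquad D_N(t) := \frac{1}{N(N)_2}\sum_{i=1}^N (\nu_t^{(i)})_2\Big\{\nu_t^{(i)} + \frac1N\sum_{j\neq i}(\nu_t^{(j)})^2\Big\},$$ and $\tau_N(u) := \inf\{ s \in \{0,1,2,\dots\} : \sum_{r=1}^s c_N(r) \geq u\}$ for $u \geq 0$ (an empty sum being $0$, so $\tau_N(0)=0$). Then for all $t \in \{1,2,\dots\}$ and all real $t' > s' \geq 0$ with $\tau_N(t') < \infty$: (a) $0 \leq D_N(t) \leq c_N(t) \leq 1$; (b) $t' - (s'+1)\mathbb{1}_{(0,\infty)}(s') \leq \sum_{r=\tau_N(s')+1}^{\tau_N(t')} c_N(r) \leq t'+1$; (c) $\tau_N(t') \geq t'$.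
   Context: $(x)_k := x(x-1)\cdots(x-k+1)$ denotes the falling factorial. $\nu_t^{(i)}$ is interpreted as the number of offspring in generation $t-1$ of individual $i$ in generation $t$ (generations labelled backwards in time), but the claim only uses that the $\nu_t^{(i)}$ are non-negative integers summing to $N$. *)

From HB Require Import structures.
From mathcomp Require Import all_boot all_order all_algebra.
From mathcomp Require Import boolp reals.
Set Implicit Arguments. Unset Strict Implicit. Unset Printing Implicit Defensive.
Import Order.TTheory GRing.Theory Num.Theory.
Local Open Scope ring_scope.

Section Defs.
Variable R : realType.

(* nu t i : offspring count of individual i (i : 'I_N) in generation t.
   Falling factorial (x)_2 is x ^_ 2 (binomial.v). *)
Definition cN (N : nat) (nu : nat -> 'I_N -> nat) (t : nat) : R :=
  (N ^_ 2)%:R^-1 * \sum_(i < N) ((nu t i) ^_ 2)%:R.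

Definition DN (N : nat) (nu : nat -> 'I_N -> nat) (t : nat) : R :=
  ((N * N ^_ 2)%:R)^-1 *
  \sum_(i < N) ((nu t i) ^_ 2)%:R *
     ((nu t i)%:R + N%:R^-1 * \sum_(j < N | j != i) ((nu t j)%:R) ^+ 2).

Definition partial (c : nat -> R) (s : nat) : R := \sum_(1 <= r < s.+1) c r.

(* tau c u = inf { s : nat | partial c s >= u }, None encoding +infinity *)
Definition tau (c : nat -> R) (u : R) : option nat :=
  match pselect (exists s, u <= partial c s) with
  | left h => Some (ex_minn h)
  | right _ => None
  end.

End Defs.

(* Part (a) is a per-generation computation: each offspring count is at most N,
   so (nu_i)_2 <= nu_i (N - 1) and summing gives c_N <= 1; and since the counts
   of the other individuals add up to N - nu_i, the bracket in D_N is at most N,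
   whence D_N <= c_N.  Parts (b) and (c) only use 0 <= c_N <= 1: the partial sums
   increase by steps of at most 1 and tau_N(u) is the first time they reach u,
   so they overshoot u by at most 1 at tau_N(u) and are bounded by the time. *)
From HB Require Import structures.
From mathcomp Require Import all_boot all_order all_algebra.
From mathcomp Require Import boolp reals.
From mathcomp Require Import lra zify.
Set Implicit Arguments. Unset Strict Implicit. Unset Printing Implicit Defensive.
Import Order.TTheory GRing.Theory Num.Theory.
Local Open Scope ring_scope.

Section PartialSums.
Variables (R : realType) (c : nat -> R).
Hypothesis c_ge0_le1 : forall r, (1 <= r)%N -> 0 <= c r <= 1.

Lemma tauP u T : tau c u = Some T ->
  u <= partial c T /\ forall s, u <= partial c s -> (T <= s)%N.
Proof.
rewrite /tau; case: pselect => // ex_s [<-].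
by case: ex_minnP => m um m_min; split=> // s /m_min.
Qed.

Lemma partial0 : partial c 0 = 0.
Proof. by rewrite /partial big_geq. Qed.

Lemma partialS s : partial c s.+1 = partial c s + c s.+1.
Proof. by rewrite /partial big_nat_recr. Qed.

Lemma sum_partialB S T : (S <= T)%N ->
  \sum_(S.+1 <= r < T.+1) c r = partial c T - partial c S.
Proof. by move=> le_ST; rewrite /partial (@big_cat_nat _ _ _ S.+1 1 T.+1) //=; lra. Qed.

Lemma partial_ge0 s : 0 <= partial c s.
Proof.
rewrite /partial big_nat; apply: sumr_ge0 => r /andP[r_ge1 _].
by case/andP: (c_ge0_le1 r_ge1).
Qed.

Lemma partial_le_nat s : partial c s <= s%:R.
Proof.
elim: s => [|s IHs]; first by rewrite partial0.
by rewrite partialS -natr1; case/andP: (c_ge0_le1 (ltn0Sn s)) => _; lra.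
Qed.

Lemma partial_tau_le u T : 0 <= u -> tau c u = Some T -> partial c T <= u + 1.
Proof.
move=> u_ge0 /tauP[_ T_min]; case: T T_min => [|T] T_min.
  by rewrite partial0; lra.
have partialT_lt : partial c T < u.
  by rewrite ltNge; apply/negP => /T_min; rewrite ltnn.
by rewrite partialS; case/andP: (c_ge0_le1 (ltn0Sn T)) => _; lra.
Qed.

Lemma partial_tau_le_if u T : 0 <= u -> tau c u = Some T ->
  partial c T <= (u + 1) * (if 0 < u then 1 else 0).
Proof.
move=> u_ge0 tauT; case: ltrP => [u_gt0 | u_le0]; first by rewrite mulr1 partial_tau_le.
have [_ /(_ 0%N)] := tauP tauT; rewrite partial0 (le_trans u_le0) // leqn0.
by move=> /(_ isT) /eqP ->; rewrite partial0 mulr0.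
Qed.

End PartialSums.

Lemma ffact2 n : (n ^_ 2 = n * n.-1)%N.
Proof. by rewrite ffactnS ffactn1. Qed.

Section OffspringCounts.
Variables (N : nat) (v : 'I_N -> nat).
Hypothesis sum_v : (\sum_(i < N) v i)%N = N.

Lemma offspring_le i : (v i <= N)%N.
Proof. by rewrite -[X in (_ <= X)%N]sum_v (bigD1 i) //= leq_addr. Qed.

Lemma sum_ffact2_le : (\sum_(i < N) v i ^_ 2 <= N ^_ 2)%N.
Proof.
have ffact2_le i : (v i ^_ 2 <= v i * N.-1)%N.
  by rewrite ffact2 leq_mul2l -!subn1 leq_sub2r ?offspring_le ?orbT.
by rewrite (leq_trans (leq_sum _ (fun i _ => ffact2_le i))) // -big_distrl /= sum_v ffact2.
Qed.

Lemma offspring_sq_others_le i :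
  (N * v i + \sum_(j < N | j != i) v j ^ 2 <= N * N)%N.
Proof.
have sum_others : (\sum_(j < N | j != i) v j = N - v i)%N.
  by move: sum_v; rewrite (bigD1 i) //= => /(congr1 (subn^~ (v i))); rewrite addKn.
have others_le j : j != i -> (v j <= N - v i)%N.
  by move=> ji; rewrite -sum_others (bigD1 j) //= leq_addr.
have : (\sum_(j < N | j != i) v j ^ 2 <= \sum_(j < N | j != i) v j * (N - v i))%N.
  by apply: leq_sum => j ji; rewrite expnS expn1 leq_mul2l others_le ?orbT.
rewrite -big_distrl /= sum_others.
have := offspring_le i; nia.
Qed.

End OffspringCounts.

Section CoalescenceRates.
Variables (R : realType) (N : nat) (nu : nat -> 'I_N -> nat).

Lemma cN_ge0 t : 0 <= cN R nu t.
Proof. by rewrite /cN mulr_ge0 ?invr_ge0 ?sumr_ge0. Qed.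

Lemma DN_ge0 t : 0 <= DN R nu t.
Proof.
rewrite /DN mulr_ge0 ?invr_ge0 // sumr_ge0 // => i _.
by rewrite mulr_ge0 ?addr_ge0 ?mulr_ge0 ?invr_ge0 ?sumr_ge0 // => j _; apply: sqr_ge0.
Qed.

Hypotheses (N_ge2 : (2 <= N)%N) (t : nat) (sum_nu : (\sum_(i < N) nu t i)%N = N).

Let N_gt0 : 0 < N%:R :> R.
Proof. by rewrite ltr0n; lia. Qed.

Let ffact2N_gt0 : 0 < (N ^_ 2)%:R :> R.
Proof. by rewrite ltr0n ffact_gt0. Qed.

Lemma cN_le1 : cN R nu t <= 1.
Proof.
by rewrite /cN ler_pdivrMl // mulr1 -natr_sum ler_nat sum_ffact2_le.
Qed.

Lemma DN_le_cN : DN R nu t <= cN R nu t.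
Proof.
have bracket_le i :
    (nu t i)%:R + N%:R^-1 * \sum_(j < N | j != i) (nu t j)%:R ^+ 2 <= N%:R :> R.
  rewrite -(ler_pM2l N_gt0) mulrDr mulrA mulfV ?gt_eqF // mul1r.
  under eq_bigr do rewrite -natrX.
  by rewrite -natr_sum -!natrM -natrD ler_nat offspring_sq_others_le.
have sum_le : \sum_(i < N) (nu t i ^_ 2)%:R *
    ((nu t i)%:R + N%:R^-1 * \sum_(j < N | j != i) (nu t j)%:R ^+ 2)
    <= N%:R * \sum_(i < N) (nu t i ^_ 2)%:R :> R.
  by rewrite mulr_sumr; apply: ler_sum => i _; rewrite mulrC ler_wpM2r.
by rewrite /DN /cN natrM invfM -mulrA mulrCA ler_wpM2l ?invr_ge0 // ler_pdivrMl.
Qed.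

End CoalescenceRates.

Theorem proposition1 (R : realType) (N : nat) (hN : (2 <= N)%N)
  (nu : nat -> 'I_N -> nat)
  (hsum : forall t, (1 <= t)%N -> (\sum_(i < N) nu t i)%N = N) :
  (forall t, (1 <= t)%N ->
     0 <= DN R nu t /\ DN R nu t <= cN R nu t /\ cN R nu t <= 1) /\
  (forall (t' s' : R) (T S : nat), 0 <= s' -> s' < t' ->
     tau (cN R nu) t' = Some T -> tau (cN R nu) s' = Some S ->
     [/\ t' - (s' + 1) * (if 0 < s' then 1 else 0)
           <= \sum_(S.+1 <= r < T.+1) cN R nu r,
         \sum_(S.+1 <= r < T.+1) cN R nu r <= t' + 1
       & t' <= T%:R]).
Proof.
split=> [t t_ge1 | t' s' T S s'_ge0 s't' tauT tauS].
  by rewrite DN_ge0 DN_le_cN ?cN_le1 ?hsum.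
have c01 r : (1 <= r)%N -> 0 <= cN R nu r <= 1.
  by move=> r_ge1; rewrite cN_ge0 cN_le1 ?hsum.
have [t'T _] := tauP tauT.
have [_ S_min] := tauP tauS.
have le_ST : (S <= T)%N by apply: S_min; lra.
have := partial_tau_le_if c01 s'_ge0 tauS.
have := partial_tau_le c01 (ltW (le_lt_trans s'_ge0 s't')) tauT.
have := partial_le_nat c01 T; have := partial_ge0 c01 S.
set slack := (s' + 1) * _.
by rewrite sum_partialB //; split; lra.
Qed.
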